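(* Let $p$ be a prime, $d\in\mathbb{N}_{+}$, $V$ a subspace of $\mathbb{F}_{p}^{d}$, and $V_{1},\dots,V_{N}$ linearly independent subspaces of $\mathbb{F}_{p}^{d}$. If $N\geq\dim(V)+2$, then $\bigcap_{i=1}^{N}(V+V_{i})=V$.
   Context: Subspaces $V_{1},\dots,V_{N}$ are linearly independent if whenever $v_{i}\in V_{i}$ and $\sum_{i}v_{i}=\mathbf0$, all $v_{i}=\mathbf0$. *)

From HB Require Import structures.
From mathcomp Require Import all_boot all_order all_algebra.
Set Implicit Arguments. Unset Strict Implicit. Unset Printing Implicit Defensive.
Import GRing.Theory.
Local Open Scope ring_scope.

Definition lin_indep_subspaces (K : fieldType) (vT : vectType K) (N : nat)
  (Vs : 'I_N -> {vspace vT}) : Prop :=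
  forall v : 'I_N -> vT, (forall i, v i \in Vs i) ->
    \sum_(i < N) v i = 0 -> forall i, v i = 0.

From HB Require Import structures.
From mathcomp Require Import all_boot all_order all_algebra.
Set Implicit Arguments. Unset Strict Implicit. Unset Printing Implicit Defensive.
Import GRing.Theory.
Local Open Scope ring_scope.

(* Take x in every V + V_i and write x = v_i + w_i with v_i in V, w_i in V_i.
   The N vectors w_i = x - v_i all lie in V + <[x]>, of dimension at most
   dim V + 1 < N, so they are linearly dependent; since they come from
   independent subspaces, a dependence forces some w_i to vanish, and then
   x = v_i lies in V. Nothing specific to F_p^d is used, so the argument is
   carried out in an arbitrary finite-dimensional vector space. *)

Section LinIndepSubspaces.
Variables (K : fieldType) (vT : vectType K) (N : nat).
Variable Vs : 'I_N -> {vspace vT}.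
Hypothesis Vs_indep : lin_indep_subspaces Vs.

Lemma free_lin_indep_subspaces (w : 'I_N -> vT) :
  (forall i, w i \in Vs i) -> (forall i, w i != 0) ->
  free [tuple w i | i < N].
Proof.
move=> wVs w_neq0; apply/freeP => k; rewrite -/(\sum_(i < N) _).
under eq_bigr => i _ do rewrite -tnth_nth tnth_mktuple.
move=> /Vs_indep kw0 i; apply/eqP.
have /eqP := kw0 (fun j => memvZ (k j) (wVs j)) i.
by rewrite scaler_eq0 (negPf (w_neq0 i)) orbF.
Qed.

Lemma lin_indep_subspaces_small_span (W : {vspace vT}) (w : 'I_N -> vT) :
  (forall i, w i \in Vs i) -> (forall i, w i \in W) -> (\dim W < N)%N ->
  exists i, w i = 0.
Proof.
move=> wVs wW ltWN.
have [/existsP[i /eqP wi0] | /existsPn w_neq0] := boolP [exists i, w i == 0].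
  by exists i.
have /eqnP := free_lin_indep_subspaces wVs w_neq0.
rewrite size_tuple => dim_span_w.
suff: (N <= \dim W)%N by rewrite leqNgt ltWN.
rewrite -dim_span_w; apply/dimvS/span_subvP => _ /mapP[i _ ->]; exact: wW.
Qed.

Theorem bigcap_addv_lin_indep (V : {vspace vT}) :
  (\dim V + 2 <= N)%N -> (\bigcap_(i < N) (V + Vs i))%VS = V.
Proof.
move=> ltVN; apply/eqP; rewrite eqEsubv; apply/andP; split; last first.
  by apply/subv_bigcapP => i _; exact: addvSl.
apply/subvP => x x_cap.
have /fin_all_exists2[w wVs xwV] i : exists2 w, w \in Vs i & x - w \in V.
  have /memv_addP[v vV [w wVi ->]] : x \in (V + Vs i)%VS.
    exact: subvP (bigcapv_inf i isT (subvv _)) x x_cap.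
  by exists w; rewrite ?addrK.
have wW i : w i \in (V + <[x]>)%VS.
  have -> : w i = - (x - w i) + x by rewrite opprB subrK.
  by rewrite memv_add ?memvN ?memv_line.
have ltWN : (\dim (V + <[x]>) < N)%N.
  rewrite (leq_ltn_trans (dimv_add_leqif V <[x]>)) // dim_vline.
  by rewrite (leq_trans _ ltVN) // addnS ltnS leq_add2l leq_b1.
have [i wi0] := lin_indep_subspaces_small_span wVs wW ltWN.
by rewrite -[x]subr0 -wi0 xwV.
Qed.

End LinIndepSubspaces.

Theorem proposition3p3 (p d N : nat) (hp : prime p) (hd : (0 < d)%N)
  (V : {vspace 'rV['F_p]_d}) (Vs : 'I_N -> {vspace 'rV['F_p]_d}) :
  lin_indep_subspaces Vs ->
  (\dim V + 2 <= N)%N ->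
  (\bigcap_(i < N) (V + Vs i))%VS = V.
Proof. by move=> Vs_indep; exact: bigcap_addv_lin_indep. Qed.
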